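(* Let $(q,\boldsymbol{\alpha}^{(p)},\boldsymbol{\alpha}^{(s)},\boldsymbol{\beta}^{(p)},\boldsymbol{\beta}^{(s)})$ be a cyclic-addition degree table (CAT) for parameters $K,L,T$ with $N$ unique entries. Let $p$ be a prime with $q\mid p-1$ and let $\boldsymbol\rho=(\rho_1,\dots,\rho_N)$ be $q$-th roots of unity in $\mathbb{F}_p$ satisfying conditions (IV)(a) and (IV)(b) of the CAT definition. Then the polynomial-code PDMM scheme with $N$ workers defined in the context by these degrees and evaluation points is $T$-private and decodable.
   Context: Definition (CAT). For a positive integer $q$ and vectors $\boldsymbol{\alpha}^{(p)}\in\mathbb{Z}_q^K,\boldsymbol{\alpha}^{(s)}\in\mathbb{Z}_q^T,\boldsymbol{\beta}^{(p)}\in\mathbb{Z}_q^L,\boldsymbol{\beta}^{(s)}\in\mathbb{Z}_q^T$ ($\mathbb{Z}_q$ the integers mod $q$), write $\{\mathbf v\}$ for the set of entries of a vector $\mathbf v$ and let (additions in $\mathbb{Z}_q$, sumsets $\mathcal A+\mathcal B=\{a+b\}$) $\mathcal{TL}=\{\boldsymbol{\alpha}^{(p)}\}+\{\boldsymbol{\beta}^{(p)}\}$, $\mathcal{TR}=\{\boldsymbol{\alpha}^{(p)}\}+\{\boldsymbol{\beta}^{(s)}\}$, $\mathcal{BL}=\{\boldsymbol{\alpha}^{(s)}\}+\{\boldsymbol{\beta}^{(p)}\}$, $\mathcal{BR}=\{\boldsymbol{\alpha}^{(s)}\}+\{\boldsymbol{\beta}^{(s)}\}$, and let $\boldsymbol\gamma$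 list the elements of $\mathcal{TL}\cup\mathcal{TR}\cup\mathcal{BL}\cup\mathcal{BR}$ in ascending order (identifying $\mathbb{Z}_q$ with $\{0,\dots,q-1\}$). For a vector $\boldsymbol\rho$ of length $n$ of $q$-th roots of unity and $\boldsymbol\delta\in\mathbb{Z}_q^m$, $\mathbf V(\boldsymbol\rho,\boldsymbol\delta)$ is the $n\times m$ matrix with entries $\rho_i^{\delta_j}$. The tuple is a CAT for $K,L,T$ with $N$ unique entries if: (I) $|\mathcal{TL}\cup\mathcal{TR}\cup\mathcal{BL}\cup\mathcal{BR}|=N$; (II) $|\mathcal{TL}|=KL$; (III) $\mathcal{TL}\cap\mathcal{TR}=\mathcal{TL}\cap\mathcal{BL}=\mathcal{TL}\cap\mathcal{BR}=\emptyset$; (IV) in every prime field $\mathbb{F}_p$ with $q\mid p-1$ there exist $N$ $q$-th roots of unity $\boldsymbol\rho=(\rho_1,\dots,\rho_N)$ such that (a) $\mathbf V(\boldsymbol\rho,\boldsymbol\gamma)$ is invertible and (b) all $T\times T$ submatrices of $\mathbf V(\boldsymbol\rho,\boldsymbol{\alpha}^{(s)})$ and of $\mathbf V(\boldsymbol\rho,\boldsymbol{\beta}^{(s)})$ are invertible. The scheme: matrices $\mathbf A\in\mathbb{F}_p^{r_A\times c_A}$ and $\mathbf B\in\mathbb{F}_p^{c_A\times c_B}$ have an arbitrary (unknown) joint distribution, with $K\mid r_A$, $L\mid c_B$. Write $\mathbf A=(\mathbf A_1^T\cdots\mathbf A_K^T)^T$ (horizontal split into $K$ equal blocks) and $\mathbf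 B=(\mathbf B_1\cdots\mathbf B_L)$ (vertical split into $L$ equal blocks). A main node draws $\mathbf R_1,\dots,\mathbf R_T$ (of the size of $\mathbf A_i$) and $\mathbf S_1,\dots,\mathbf S_T$ (of the size of $\mathbf B_j$) independently and uniformly at random, independent of $(\mathbf A,\mathbf B)$, and forms $\mathbf F(x)=\sum_{i=1}^K\mathbf A_i x^{\alpha^{(p)}_i}+\sum_{i=1}^T\mathbf R_i x^{\alpha^{(s)}_i}$ and $\mathbf G(x)=\sum_{j=1}^L\mathbf B_j x^{\beta^{(p)}_j}+\sum_{j=1}^T\mathbf S_j x^{\beta^{(s)}_j}$ (exponents taken as representatives in $\{0,\dots,q-1\}$). Worker $n\in\{1,\dots,N\}$ receives $\widetilde{\mathbf A}_n=\mathbf F(\rho_n)$, $\widetilde{\mathbf B}_n=\mathbf G(\rho_n)$ and returns $\widetilde{\mathbf A}_n\widetilde{\mathbf B}_n$. The scheme is $T$-private if for every set $\mathcal T\subset\{1,\dots,N\}$ with $|\mathcal T|=T$ the mutual information between $(\mathbf A,\mathbf B)$ and $\{(\widetilde{\mathbf A}_n,\widetilde{\mathbf B}_n):n\in\mathcal T\}$ is zero. It is decodable if the main node can compute all products $\mathbf A_i\mathbf B_j$, $i\in\{1,\dots,K\}$, $j\in\{1,\dots,L\}$, from the $N$ returned products. *)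

From HB Require Import structures.
From mathcomp Require Import all_boot all_order all_algebra.
From mathcomp Require Import reals exp.
Set Implicit Arguments. Unset Strict Implicit. Unset Printing Implicit Defensive.
Import Order.TTheory GRing.Theory Num.Theory.
Local Open Scope ring_scope.

Definition entries (q n : nat) (v : 'I_n -> 'I_q) : {set 'I_q} :=
  [set v i | i : 'I_n].

Definition sumset (q : nat) (A B : {set 'I_q}) : {set 'I_q} :=
  [set x : 'I_q | [exists a in A, exists b in B, val x == ((val a + val b) %% q)%N]].

Section CATdefs.
Variables (q K L T : nat).
Variables (ap : 'I_K -> 'I_q) (as_ : 'I_T -> 'I_q)
          (bp : 'I_L -> 'I_q) (bs : 'I_T -> 'I_q).

Definition TL := sumset (entries ap) (entries bp).
Definition TR := sumset (entries ap) (entries bs).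
Definition BL := sumset (entries as_) (entries bp).
Definition BR := sumset (entries as_) (entries bs).
Definition allU := TL :|: TR :|: BL :|: BR.

Definition gamma : seq nat := sort leq [seq val x | x in allU].
End CATdefs.

Definition Vmx (F : ringType) (n m : nat) (rho : 'I_n -> F) (delta : 'I_m -> nat)
  : 'M[F]_(n, m) := \matrix_(i < n, j < m) rho i ^+ delta j.

Definition CAT_eval_conditions (q K L T N : nat)
    (ap : 'I_K -> 'I_q) (as_ : 'I_T -> 'I_q) (bp : 'I_L -> 'I_q) (bs : 'I_T -> 'I_q)
    (F : comUnitRingType) (rho : 'I_N -> F) : Prop :=
  (forall i, rho i ^+ q = 1) /\
  Vmx rho (fun j : 'I_N => nth 0%N (gamma ap as_ bp bs) j) \in unitmx /\
  (forall f : 'I_T -> 'I_N, injective f ->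
      rowsub f (Vmx rho (fun j => val (as_ j))) \in unitmx /\
      rowsub f (Vmx rho (fun j => val (bs j))) \in unitmx).

Definition is_CAT (q K L T N : nat)
    (ap : 'I_K -> 'I_q) (as_ : 'I_T -> 'I_q) (bp : 'I_L -> 'I_q) (bs : 'I_T -> 'I_q)
  : Prop :=
  (0 < q)%N /\
  #|allU ap as_ bp bs| = N /\
  #|TL ap bp| = (K * L)%N /\
  TL ap bp :&: TR ap bs = set0 /\ TL ap bp :&: BL as_ bp = set0 /\
  TL ap bp :&: BR as_ bs = set0 /\
  (forall p : nat, prime p -> (q %| p.-1)%N ->
     exists rho : 'I_N -> 'F_p, CAT_eval_conditions ap as_ bp bs rho).

Lemma block_idx_lt (K m : nat) (i : 'I_K) (r : 'I_m) : (i * m + r < K * m)%N.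
Proof.
case: i r => i Hi [r Hr] /=.
apply: (@leq_trans (i * m + m)); first by rewrite ltn_add2l.
by rewrite -mulSnr leq_mul2r Hi orbT.
Qed.

Definition block_idx (K m : nat) (i : 'I_K) (r : 'I_m) : 'I_(K * m) :=
  Ordinal (block_idx_lt i r).

(* A = (A_1^T ... A_K^T)^T : i-th horizontal block (rows i*m .. i*m+m-1) *)
Definition Ablk (F : Type) (K m c : nat) (A : 'M[F]_(K * m, c)) (i : 'I_K)
  : 'M[F]_(m, c) := \matrix_(r < m, j < c) A (block_idx i r) j.

(* B = (B_1 ... B_L) : j-th vertical block (columns j*n .. j*n+n-1) *)
Definition Bblk (F : Type) (L n c : nat) (B : 'M[F]_(c, L * n)) (j : 'I_L)
  : 'M[F]_(c, n) := \matrix_(r < c, s < n) B r (block_idx j s).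

Section Scheme.
Variables (F : comRingType) (q K L T N m c n : nat).
Variables (ap : 'I_K -> 'I_q) (as_ : 'I_T -> 'I_q)
          (bp : 'I_L -> 'I_q) (bs : 'I_T -> 'I_q) (rho : 'I_N -> F).

Definition shareA (A : 'M[F]_(K * m, c)) (R : 'I_T -> 'M[F]_(m, c)) (k : 'I_N)
  : 'M[F]_(m, c) :=
  \sum_(i < K) rho k ^+ ap i *: Ablk A i + \sum_(t < T) rho k ^+ as_ t *: R t.

Definition shareB (B : 'M[F]_(c, L * n)) (S : 'I_T -> 'M[F]_(c, n)) (k : 'I_N)
  : 'M[F]_(c, n) :=
  \sum_(j < L) rho k ^+ bp j *: Bblk B j + \sum_(t < T) rho k ^+ bs t *: S t.

Definition decodable : Prop :=
  exists dec : ('I_N -> 'M[F]_(m, n)) -> 'I_K -> 'I_L -> 'M[F]_(m, n),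
    forall (A : 'M[F]_(K * m, c)) (B : 'M[F]_(c, L * n))
           (R : 'I_T -> 'M[F]_(m, c)) (S : 'I_T -> 'M[F]_(c, n)) i j,
      dec (fun k => shareA A R k *m shareB B S k) i j = Ablk A i *m Bblk B j.
End Scheme.

Section MutualInfo.
Variable (R : realType).

Definition is_pmf (Om : finType) (P : Om -> R) : Prop :=
  (forall w, 0 <= P w) /\ \sum_w P w = 1.

(* I(X;Y) for random variables X, Y on a finite probability space (Om, P);
   terms with P(X=x,Y=y) = 0 contribute 0 (convention 0 log 0 = 0). *)
Definition mutual_info (Om TX TY : finType) (P : Om -> R)
    (X : Om -> TX) (Y : Om -> TY) : R :=
  \sum_(x : TX) \sum_(y : TY)
    let pxy := \sum_(w | (X w == x) && (Y w == y)) P w in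
    let px := \sum_(w | X w == x) P w in
    let py := \sum_(w | Y w == y) P w in
    if pxy == 0 then 0 else pxy * ln (pxy / (px * py)).
End MutualInfo.

(* The joint law of ((A,B), (R_1..R_T), (S_1..S_T)): (A,B) ~ PAB (arbitrary),
   the R_t, S_t i.i.d. uniform and independent of (A,B). *)
Section Privacy.
Variables (R : realType) (p q K L T N m c n : nat).
Variables (ap : 'I_K -> 'I_q) (as_ : 'I_T -> 'I_q)
          (bp : 'I_L -> 'I_q) (bs : 'I_T -> 'I_q) (rho : 'I_N -> 'F_p).

Definition DataT := ('M['F_p]_(K * m, c) * 'M['F_p]_(c, L * n))%type.
Definition RandT :=
  ({ffun 'I_T -> 'M['F_p]_(m, c)} * {ffun 'I_T -> 'M['F_p]_(c, n)})%type.
Definition OmegaT := (DataT * RandT)%type.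

Definition scheme_law (PAB : DataT -> R) (w : OmegaT) : R :=
  PAB w.1 / #|{: RandT}|%:R.

Definition colluders_view (Sset : {set 'I_N}) (w : OmegaT)
  : {ffun 'I_N -> 'M['F_p]_(m, c) * 'M['F_p]_(c, n)} :=
  [ffun k => if k \in Sset then
       (shareA ap as_ rho w.1.1 w.2.1 k, shareB bp bs rho w.1.2 w.2.2 k)
     else (0, 0)].

Definition T_private : Prop :=
  forall PAB : DataT -> R, is_pmf PAB ->
  forall Sset : {set 'I_N}, #|Sset| = T ->
    mutual_info (scheme_law PAB) (fun w : OmegaT => w.1) (colluders_view Sset) = 0.
End Privacy.

(** Privacy: fix the [T] colluding workers [rho_(f 1), ..., rho_(f T)].  As
    the [T x T] matrices [(rho_(f t) ^ as_s)] and [(rho_(f t) ^ bs_s)] are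
    invertible, there are masks [cA], [cB] such that at these workers the
    shares of [(A, B)] with randomness [(R, S)] coincide with the shares of
    [(0, 0)] with randomness [(R + cA, S + cB)].  Translation is a bijection
    of the uniform randomness, so the law of the view does not depend on
    [(A, B)] and the mutual information vanishes.

    Decodability: since [rho_k ^ q = 1], the product of the two shares at
    [rho_k] is [\sum_d rho_k ^ d C_d] with [d] running over [gamma], so
    inverting [V(rho, gamma)] recovers every coefficient [C_d].  By (II) and
    (III) the exponent [a_i + b_j] is produced by the pair of blocks
    [(A_i, B_j)] only, so [C_(a_i + b_j) = A_i B_j]. *)

From HB Require Import structures.
From mathcomp Require Import all_boot all_order all_algebra.
From mathcomp Require Import reals exp.
From mathcomp Require Import ring.
Import Order.TTheory GRing.Theory Num.Theory.
Set Implicit Arguments. Unset Strict Implicit. Unset Printing Implicit Defensive.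
Local Open Scope ring_scope.

Lemma lcomb_mulmx1 (R : pzRingType) (V : lmodType R) n (M M' : 'M[R]_n)
    (c : 'I_n -> V) :
  M *m M' = 1%:M -> forall i, \sum_k M i k *: \sum_l M' k l *: c l = c i.
Proof.
move=> MM' i.
under eq_bigr do rewrite scaler_sumr.
rewrite exchange_big /=.
under eq_bigr => l _.
  under eq_bigr do rewrite scalerA.
  rewrite -scaler_suml.
  have -> : \sum_k M i k * M' k l = (M *m M') i l by rewrite mxE.
  rewrite MM' mxE.
  over.
rewrite (bigD1 i) //= eqxx scale1r big1 ?addr0 // => l /negbTE.
by rewrite eq_sym => ->; rewrite scale0r.
Qed.

Lemma unitmx_lcomb_surj (R : comUnitRingType) (V : lmodType R) n (M : 'M[R]_n)
    (D : 'I_n -> V) :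
  M \in unitmx -> exists c : 'I_n -> V, forall i, \sum_k M i k *: c k = D i.
Proof.
move=> Mu; exists (fun k => \sum_l invmx M k l *: D l).
by apply: lcomb_mulmx1; rewrite mulmxV.
Qed.

Lemma set_enum_inj (N T : nat) (X : {set 'I_N}) :
  #|X| = T -> exists2 f : 'I_T -> 'I_N, injective f & {subset X <= codom f}.
Proof.
move=> XT; exists (fun t => enum_val (cast_ord (esym XT) t)).
  by move=> s t /enum_val_inj /cast_ord_inj.
move=> k Xk; apply/codomP; exists (cast_ord XT (enum_rank_in Xk k)).
by rewrite cast_ordK enum_rankK_in.
Qed.

Section IndependentView.
Variables (R : realType) (DT RT TY : finType) (PX : DT -> R) (Y : DT * RT -> TY).
Hypothesis PX1 : \sum_x PX x = 1.

Let C : R := #|{: RT}|%:R.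
Let law (w : DT * RT) : R := PX w.1 / C.
Let count x y : R := \sum_(r | Y (x, r) == y) 1.

Lemma sum_law_pair (P : pred (DT * RT)) :
  \sum_(w | P w) law w = \sum_x PX x / C * \sum_(r | P (x, r)) 1.
Proof.
under [RHS]eq_bigr do rewrite mulr_sumr.
rewrite pair_big_dep; apply: eq_big => [[x r] //|[x r] _].
by rewrite mulr1.
Qed.

Lemma sum_law_fst x : \sum_(w | w.1 == x) law w = PX x / C * C.
Proof.
rewrite sum_law_pair (bigD1 x) //= eqxx [X in _ + X]big1 ?addr0; last first.
  by move=> x' /negbTE /= ->; rewrite big_pred0_eq mulr0.
by rewrite sumr_const.
Qed.

Lemma sum_law_joint x y :
  \sum_(w | (w.1 == x) && (Y w == y)) law w = PX x / C * count x y.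
Proof.
rewrite sum_law_pair (bigD1 x) //= eqxx [X in _ + X]big1 ?addr0 //.
by move=> x' /negbTE /= ->; rewrite big_pred0_eq mulr0.
Qed.

Lemma sum_law_snd x y : (forall x', count x' y = count x y) ->
  \sum_(w | Y w == y) law w = count x y / C.
Proof.
move=> count_x; rewrite sum_law_pair.
under eq_bigr => x' _ do rewrite [\sum_(r | _) _]count_x.
by rewrite -mulr_suml -mulr_suml PX1 mul1r mulrC.
Qed.

Lemma mutual_info_fst_indep :
  (forall x x' y, count x y = count x' y) -> mutual_info law fst Y = 0.
Proof.
move=> count_indep; apply: big1 => x _; apply: big1 => y _ /=.
rewrite sum_law_joint sum_law_fst (sum_law_snd (fun x' => count_indep x' x y)).
have [-> | C0] := eqVneq C 0; first by rewrite invr0 !mulr0 mul0r eqxx.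
case: ifP => // /negbT joint0.
have -> : PX x / C * C * (count x y / C) = PX x / C * count x y by field.
by rewrite divff // ln1 mulr0.
Qed.

Lemma mutual_info_fst_reparam x0 :
  (forall x, exists2 h : RT -> RT, bijective h & forall r, Y (x, r) = Y (x0, h r)) ->
  mutual_info law fst Y = 0.
Proof.
move=> reparam; apply: mutual_info_fst_indep.
suff count_x0 x y : count x y = count x0 y by move=> x x' y; rewrite !count_x0.
have [h /bij_inj h_inj Yh] := reparam x.
by rewrite /count [RHS](reindex_inj h_inj); apply: eq_bigl => r; rewrite Yh.
Qed.

End IndependentView.

Lemma vandermonde_rowsub_solve (F : comUnitRingType) (V : lmodType F) N T
    (rho : 'I_N -> F) (e : 'I_T -> nat) (f : 'I_T -> 'I_N) (X : {set 'I_N})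
    (D : 'I_N -> V) :
  {subset X <= codom f} -> rowsub f (Vmx rho e) \in unitmx ->
  exists c : 'I_T -> V, forall k, k \in X -> \sum_t rho k ^+ e t *: c t = D k.
Proof.
move=> Xf fu; have [c Dc] := unitmx_lcomb_surj (fun t => D (f t)) fu.
exists c => k /Xf /codomP [t ->]; rewrite -Dc.
by apply: eq_bigr => s _; rewrite !mxE.
Qed.

Lemma Ablk0 (F : nmodType) K m c (i : 'I_K) : Ablk (0 : 'M[F]_(K * m, c)) i = 0.
Proof. by apply/matrixP => r s; rewrite !mxE. Qed.

Lemma Bblk0 (F : nmodType) L n c (j : 'I_L) : Bblk (0 : 'M[F]_(c, L * n)) j = 0.
Proof. by apply/matrixP => r s; rewrite !mxE. Qed.

Section Masking.
Variables (F : comNzRingType) (q K L T N m c n : nat).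
Variables (ap : 'I_K -> 'I_q) (as_ : 'I_T -> 'I_q) (bp : 'I_L -> 'I_q) (bs : 'I_T -> 'I_q).
Variables (rho : 'I_N -> F) (k : 'I_N).

Lemma shareA_absorb (A : 'M[F]_(K * m, c)) (R R' cA : 'I_T -> 'M[F]_(m, c)) :
  \sum_i rho k ^+ ap i *: Ablk A i = \sum_t rho k ^+ as_ t *: cA t ->
  (forall t, R' t = R t + cA t) ->
  shareA ap as_ rho A R k = shareA ap as_ rho 0 R' k.
Proof.
move=> dataA R'E; rewrite /shareA dataA [X in _ = X + _]big1 => [|i _]; last first.
  by rewrite Ablk0 scaler0.
by rewrite add0r addrC -big_split; apply: eq_bigr => t _; rewrite R'E scalerDr.
Qed.

Lemma shareB_absorb (B : 'M[F]_(c, L * n)) (S S' cB : 'I_T -> 'M[F]_(c, n)) :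
  \sum_j rho k ^+ bp j *: Bblk B j = \sum_t rho k ^+ bs t *: cB t ->
  (forall t, S' t = S t + cB t) ->
  shareB bp bs rho B S k = shareB bp bs rho 0 S' k.
Proof.
move=> dataB S'E; rewrite /shareB dataB [X in _ = X + _]big1 => [|j _]; last first.
  by rewrite Bblk0 scaler0.
by rewrite add0r addrC -big_split; apply: eq_bigr => t _; rewrite S'E scalerDr.
Qed.

End Masking.

Lemma colluders_view_absorb p q K L T N m c n (ap : 'I_K -> 'I_q)
    (as_ : 'I_T -> 'I_q) (bp : 'I_L -> 'I_q) (bs : 'I_T -> 'I_q)
    (rho : 'I_N -> 'F_p) (X : {set 'I_N}) (f : 'I_T -> 'I_N) :
  {subset X <= codom f} ->
  rowsub f (Vmx rho (fun t => val (as_ t))) \in unitmx ->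
  rowsub f (Vmx rho (fun t => val (bs t))) \in unitmx ->
  forall x : DataT p K L m c n,
  exists2 h : RandT p T m c n -> RandT p T m c n, bijective h &
    forall r, colluders_view ap as_ bp bs rho X (x, r) =
              colluders_view ap as_ bp bs rho X ((0, 0), h r).
Proof.
move=> Xf fAu fBu [A B].
have [cA dataA] := vandermonde_rowsub_solve (fun k => \sum_i rho k ^+ ap i *: Ablk A i) Xf fAu.
have [cB dataB] := vandermonde_rowsub_solve (fun k => \sum_j rho k ^+ bp j *: Bblk B j) Xf fBu.
pose shift dA dB (r : RandT p T m c n) : RandT p T m c n :=
  ([ffun t => r.1 t + dA t], [ffun t => r.2 t + dB t]).
exists (shift cA cB).
  exists (shift (fun t => - cA t) (fun t => - cB t)) => -[r1 r2];
  by congr pair; apply/ffunP => t; rewrite !ffunE ?addrK ?subrK.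
move=> [R S]; apply/ffunP => k; rewrite !ffunE /=; case: ifP => // kX.
by congr pair; [apply: shareA_absorb (esym (dataA k kX)) _
  |apply: shareB_absorb (esym (dataB k kX)) _] => t; rewrite ffunE.
Qed.

Lemma T_private_of_rowsub_unitmx (R : realType) p q K L T N m c n
    (ap : 'I_K -> 'I_q) (as_ : 'I_T -> 'I_q) (bp : 'I_L -> 'I_q) (bs : 'I_T -> 'I_q)
    (rho : 'I_N -> 'F_p) :
  (forall f : 'I_T -> 'I_N, injective f ->
     rowsub f (Vmx rho (fun t => val (as_ t))) \in unitmx /\
     rowsub f (Vmx rho (fun t => val (bs t))) \in unitmx) ->
  T_private R m c n ap as_ bp bs rho.
Proof.
move=> rowsub_unit PAB [_ PAB1] X XT.
have [f f_inj Xf] := set_enum_inj XT.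
have [fAu fBu] := rowsub_unit f f_inj.
apply: (mutual_info_fst_reparam (RT := RandT p T m c n) PAB1).
exact: colluders_view_absorb Xf fAu fBu.
Qed.

Lemma mem_sumset q n1 n2 (f : 'I_n1 -> 'I_q) (g : 'I_n2 -> 'I_q) (x : 'I_q) i j :
  val x = ((f i + g j) %% q)%N -> x \in sumset (entries f) (entries g).
Proof.
move=> xE; rewrite inE; apply/existsP; exists (f i); rewrite imset_f //=.
by apply/existsP; exists (g j); rewrite imset_f //= xE.
Qed.

Lemma uniq_nth_ord (T : eqType) (x0 : T) (s : seq T) N x :
  uniq s -> size s = N -> x \in s ->
  exists j0 : 'I_N, forall j : 'I_N, (nth x0 s j == x) = (j == j0).
Proof.
move=> s_uniq sN sx; have ltxN : (index x s < N)%N by rewrite -sN index_mem.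
exists (Ordinal ltxN) => j.
by rewrite -{1}(nth_index x0 sx) nth_uniq ?sN.
Qed.

Section Decoding.
Variables (q K L T : nat).
Variables (ap : 'I_K -> 'I_q) (as_ : 'I_T -> 'I_q) (bp : 'I_L -> 'I_q) (bs : 'I_T -> 'I_q).
Hypothesis q_gt0 : (0 < q)%N.

(* The blocks of [F(x)] are indexed by ['I_K + 'I_T]: [inl i] stands for
   [A_i] and [inr t] for [R_t]; likewise for [G(x)]. *)
Definition degA (u : 'I_K + 'I_T) : nat := match u with inl i => ap i | inr t => as_ t end.
Definition degB (v : 'I_L + 'I_T) : nat := match v with inl j => bp j | inr t => bs t end.
Definition prod_deg u v : nat := ((degA u + degB v) %% q)%N.

Local Notation Gamma := (gamma ap as_ bp bs).

Lemma prod_deg_in_gamma u v : prod_deg u v \in Gamma.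
Proof.
have xU : Ordinal (ltn_pmod (degA u + degB v) q_gt0) \in allU ap as_ bp bs.
  rewrite !in_setU; case: u v => [i|i] [j|j];
  by rewrite (mem_sumset (i := i) (j := j)) ?orbT.
by rewrite mem_sort (image_f val xU).
Qed.

Lemma size_gamma : size Gamma = #|allU ap as_ bp bs|.
Proof. by rewrite size_sort size_image. Qed.

Lemma uniq_gamma : uniq Gamma.
Proof. by rewrite sort_uniq map_inj_uniq ?enum_uniq //; apply: val_inj. Qed.

Lemma card_TL_inj : #|TL ap bp| = (K * L)%N ->
  forall i1 j1 i2 j2, prod_deg (inl i1) (inl j1) = prod_deg (inl i2) (inl j2) ->
  i1 = i2 /\ j1 = j2.
Proof.
move=> TL_card i1 j1 i2 j2 eq_deg.
pose phi (ij : 'I_K * 'I_L) : 'I_q := Ordinal (ltn_pmod (ap ij.1 + bp ij.2) q_gt0).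
have TL_phi : TL ap bp \subset phi @: setT.
  apply/subsetP => x; rewrite inE => /existsP [_ /andP [/imsetP [i _ ->]]].
  move=> /existsP [_ /andP [/imsetP [j _ ->] /eqP xE]].
  by apply/imsetP; exists (i, j) => //; apply: val_inj.
have /imset_injP phi_inj : #|phi @: setT| == #|[set: 'I_K * 'I_L]|.
  rewrite eqn_leq leq_imset_card cardsT card_prod !card_ord -TL_card.
  exact: subset_leq_card.
have phiE : phi (i1, j1) = phi (i2, j2) by apply: val_inj.
by have [] := phi_inj (i1, j1) (i2, j2) (in_setT _) (in_setT _) phiE.
Qed.

Hypotheses (TL_card : #|TL ap bp| = (K * L)%N) (TL_TR : TL ap bp :&: TR ap bs = set0)
  (TL_BL : TL ap bp :&: BL as_ bp = set0) (TL_BR : TL ap bp :&: BR as_ bs = set0).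

Lemma prod_deg_TL i j u v :
  prod_deg u v = prod_deg (inl i) (inl j) -> u = inl i /\ v = inl j.
Proof.
pose x : 'I_q := Ordinal (ltn_pmod (ap i + bp j) q_gt0).
have notTL Y : TL ap bp :&: Y = set0 -> x \notin Y.
  move=> TL_Y; apply/negP => xY; move: (in_set0 x).
  by rewrite -TL_Y in_setI xY (mem_sumset (x := x) (i := i) (j := j)).
case: u v => [i'|t] [j'|s] /esym eq_deg.
- by have [-> ->] := card_TL_inj TL_card (esym eq_deg).
- by have := notTL _ TL_TR; rewrite (mem_sumset (x := x) (i := i') (j := s) eq_deg).
- by have := notTL _ TL_BL; rewrite (mem_sumset (x := x) (i := t) (j := j') eq_deg).
- by have := notTL _ TL_BR; rewrite (mem_sumset (x := x) (i := t) (j := s) eq_deg).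
Qed.

Variables (F : comUnitRingType) (N m c n : nat) (rho : 'I_N -> F).
Hypotheses (rho_unity : forall k, rho k ^+ q = 1) (allU_card : #|allU ap as_ bp bs| = N).

Local Notation Vgamma := (Vmx rho (fun j : 'I_N => nth 0%N Gamma j)).
Hypothesis Vgamma_unit : Vgamma \in unitmx.

(* The filter selects the unique position of [a_i + b_j] in [gamma]. *)
Definition decoder (W : 'I_N -> 'M[F]_(m, n)) (i : 'I_K) (j : 'I_L) : 'M[F]_(m, n) :=
  \sum_(j' : 'I_N | nth 0%N Gamma j' == prod_deg (inl i) (inl j))
    \sum_k invmx Vgamma j' k *: W k.

Variables (A : 'M[F]_(K * m, c)) (B : 'M[F]_(c, L * n)).
Variables (R : 'I_T -> 'M[F]_(m, c)) (S : 'I_T -> 'M[F]_(c, n)).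

Definition blockA u := match u with inl i => Ablk A i | inr t => R t end.
Definition blockB v := match v with inl j => Bblk B j | inr t => S t end.
Definition prod_coef d := \sum_u \sum_(v | prod_deg u v == d) blockA u *m blockB v.

Lemma share_mul_expand k :
  shareA ap as_ rho A R k *m shareB bp bs rho B S k =
  \sum_u \sum_v rho k ^+ prod_deg u v *: (blockA u *m blockB v).
Proof.
have -> : shareA ap as_ rho A R k = \sum_u rho k ^+ degA u *: blockA u.
  by rewrite /shareA big_sumType.
have -> : shareB bp bs rho B S k = \sum_v rho k ^+ degB v *: blockB v.
  by rewrite /shareB big_sumType.
rewrite mulmx_suml; apply: eq_bigr => u _; rewrite mulmx_sumr; apply: eq_bigr => v _.
by rewrite -scalemxAl -scalemxAr scalerA -exprD expr_mod.
Qed.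

Lemma share_mul_gamma k :
  shareA ap as_ rho A R k *m shareB bp bs rho B S k =
  \sum_j Vgamma k j *: prod_coef (nth 0%N Gamma j).
Proof.
rewrite share_mul_expand.
under [RHS]eq_bigr do rewrite scaler_sumr.
rewrite [RHS]exchange_big; apply: eq_bigr => u _.
under [RHS]eq_bigr do rewrite scaler_sumr.
rewrite [RHS](exchange_big_dep predT) //; apply: eq_bigr => v _.
have [j0 nth_j0] :=
  uniq_nth_ord 0%N uniq_gamma (etrans size_gamma allU_card) (prod_deg_in_gamma u v).
rewrite (eq_bigl (pred1 j0)) ?big_pred1_eq => [|j]; last by rewrite /= -nth_j0 eq_sym.
by move: (nth_j0 j0); rewrite eqxx mxE => /eqP ->.
Qed.

Lemma prod_coef_TL i j : prod_coef (prod_deg (inl i) (inl j)) = Ablk A i *m Bblk B j.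
Proof.
rewrite /prod_coef (bigD1 (inl i)) //= [X in _ + X]big1 ?addr0 => [|u ui]; last first.
  by apply: big1 => v /eqP /prod_deg_TL [ui_eq _]; rewrite ui_eq eqxx in ui.
rewrite (bigD1 (inl j)) ?eqxx //= big1 ?addr0 // => v /andP [/eqP /prod_deg_TL [_ ->]].
by rewrite eqxx.
Qed.

Lemma decoder_correct i j :
  decoder (fun k => shareA ap as_ rho A R k *m shareB bp bs rho B S k) i j =
  Ablk A i *m Bblk B j.
Proof.
have recover j' : \sum_k invmx Vgamma j' k *:
    (shareA ap as_ rho A R k *m shareB bp bs rho B S k) = prod_coef (nth 0%N Gamma j').
  under eq_bigr do rewrite share_mul_gamma.
  by apply: lcomb_mulmx1; rewrite mulVmx.
have [j0 nth_j0] := uniq_nth_ord 0%N uniq_gamma (etrans size_gamma allU_card)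
  (prod_deg_in_gamma (inl i) (inl j)).
rewrite /decoder (eq_bigl (pred1 j0)) ?big_pred1_eq ?recover => [|j']; last exact: nth_j0.
by move: (nth_j0 j0); rewrite eqxx => /eqP ->; apply: prod_coef_TL.
Qed.

End Decoding.

Lemma CAT_decodable (F : comUnitRingType) q K L T N m c n (ap : 'I_K -> 'I_q)
    (as_ : 'I_T -> 'I_q) (bp : 'I_L -> 'I_q) (bs : 'I_T -> 'I_q) (rho : 'I_N -> F) :
  is_CAT N ap as_ bp bs -> CAT_eval_conditions ap as_ bp bs rho ->
  decodable m c n ap as_ bp bs rho.
Proof.
move=> [q_gt0 [allU_card [TL_card [TL_TR [TL_BL [TL_BR _]]]]]] [rho_unity [V_unit _]].
exists (decoder ap as_ bp bs rho) => A B R S i j.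
exact: decoder_correct.
Qed.

Theorem theorem1 (q K L T N : nat)
    (ap : 'I_K -> 'I_q) (as_ : 'I_T -> 'I_q) (bp : 'I_L -> 'I_q) (bs : 'I_T -> 'I_q)
    (Hcat : is_CAT N ap as_ bp bs)
    (p : nat) (Hp : prime p) (Hqp : (q %| p.-1)%N)
    (rho : 'I_N -> 'F_p) (Hrho : CAT_eval_conditions ap as_ bp bs rho) :
  forall m c n : nat,
    (forall R : realType, T_private R m c n ap as_ bp bs rho) /\
    decodable m c n ap as_ bp bs rho.
Proof.
move=> m c n; split; last exact: CAT_decodable.
by move=> R; apply: T_private_of_rowsub_unitmx; case: Hrho => _ [].
Qed.
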